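(* Let $\mathcal{L}_\land\subseteq\{\land,\lor,\to,\lnot,0,1\}$ be a language containing $\land$ and $\Phi$ a Sahlqvist quasiequation in $\mathcal{L}_\land$. For every $\mathcal{L}_\land$-subreduct $\boldsymbol{A}$ of a Heyting algebra, $\boldsymbol{A}\vDash\Phi$ if and only if $\boldsymbol{A}_\ast\vDash\mathsf{tr}(\Phi)$.
   Context: Formulas over variables with $\land,\lor,\to,\lnot,0,1$. An occurrence of a variable is positive (negative) if the number of negations and antecedents of implications in whose scope it lies is even (odd); a formula is positive (negative) if all its variable occurrences are. A Sahlqvist antecedent is built from variables, negative formulas and $0,1$ using only $\land,\lor$. A Sahlqvist implication is a positive formula, or $\lnot\varphi$ with $\varphi$ a Sahlqvist antecedent, or $\varphi\to\psi$ with $\varphi$ a Sahlqvist antecedent and $\psi$ positive. A Sahlqvist quasiequation is $\varphi_1\land y\le z\,\&\cdots\&\,\varphi_n\land y\le z\Longrightarrow y\le z$ (universally quantified), with $y,z$ distinct variables not in the $\varphi_i$, each $\varphi_i$ built from Sahlqvist implications using only $\land,\lor$, and $a\le b$ meaning $a\land b\approx a$; it is in $\mathcal{L}_\land$ if all symbols of the $\varphi_i$ lie in $\mathcal{L}_\land$. For a poset $\mathbb{X}$, $\mathsf{Up}(\mathbb{X})$ is the Heyting algebra of upsets $\langle\mathsf{Up}(\mathbb{X});\cap,\cup,\to,\emptyset,X\rangle$ with $U\to V=X\smallsetminus{\downarrow}(U\smallsetminus V)$. For each Sahlqvist quasiequation $\Phi$, $\mathsf{tr}(\Phi)$ is the effectively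 computable first-order sentence in the language of posets (the Sahlqvist correspondent of the Gödel–McKinsey–Tarski translation of $\Phi$) satisfying, for every poset $\mathbb{X}$: $\mathsf{Up}(\mathbb{X})\vDash\Phi$ iff $\mathbb{X}\vDash\mathsf{tr}(\Phi)$. An $\mathcal{L}_\land$-subreduct of a Heyting algebra is a subalgebra of its $\mathcal{L}_\land$-reduct; for it, $\boldsymbol{A}_\ast$ is the poset (under inclusion) of meet irreducible filters, where a filter is a nonempty upset (w.r.t. $a\le b\iff a\land b=a$) closed under $\land$, meet irreducible if proper and not the intersection of two filters both different from it. *)

From Stdlib Require Import List Bool FunctionalExtensionality
  PropExtensionality ProofIrrelevance.
Import ListNotations.

Inductive fm : Type :=
| Var : nat -> fm
| And : fm -> fm -> fm
| Or  : fm -> fm -> fm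
| Imp : fm -> fm -> fm
| Not : fm -> fm
| Bot : fm
| Top : fm.

Inductive conn : Type := cAnd | cOr | cImp | cNot | c0 | c1.

Fixpoint in_lang (L : conn -> bool) (f : fm) : bool :=
  match f with
  | Var _ => true
  | And a b => L cAnd && in_lang L a && in_lang L b
  | Or a b => L cOr && in_lang L a && in_lang L b
  | Imp a b => L cImp && in_lang L a && in_lang L b
  | Not a => L cNot && in_lang L a
  | Bot => L c0
  | Top => L c1
  end.

Fixpoint occurs (n : nat) (f : fm) : bool :=
  match f with
  | Var m => Nat.eqb n m
  | And a b | Or a b | Imp a b => occurs n a || occurs n b
  | Not a => occurs n a
  | Bot | Top => false
  end.

Fixpoint positive (f : fm) : bool :=
  match f with
  | Var _ => true
  | And a b | Or a b => positive a && positive b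
  | Imp a b => negative a && positive b
  | Not a => negative a
  | Bot | Top => true
  end
with negative (f : fm) : bool :=
  match f with
  | Var _ => false
  | And a b | Or a b => negative a && negative b
  | Imp a b => positive a && negative b
  | Not a => positive a
  | Bot | Top => true
  end.

Inductive sahl_ante : fm -> Prop :=
| sa_var n : sahl_ante (Var n)
| sa_negative f : negative f = true -> sahl_ante f
| sa_bot : sahl_ante Bot
| sa_top : sahl_ante Top
| sa_and a b : sahl_ante a -> sahl_ante b -> sahl_ante (And a b)
| sa_or a b : sahl_ante a -> sahl_ante b -> sahl_ante (Or a b).

Definition sahl_impl (f : fm) : Prop :=
  positive f = true \/
  (exists a, f = Not a /\ sahl_ante a) \/
  (exists a b, f = Imp a b /\ sahl_ante a /\ positive b = true).

Inductive sahl_body : fm -> Prop :=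
| sb_impl f : sahl_impl f -> sahl_body f
| sb_and a b : sahl_body a -> sahl_body b -> sahl_body (And a b)
| sb_or a b : sahl_body a -> sahl_body b -> sahl_body (Or a b).

(* The Sahlqvist quasiequation
     phi_1 /\ y <= z & ... & phi_n /\ y <= z  ==>  y <= z
   is represented by the data (phis, y, z) with phis = [phi_1; ...; phi_n]. *)
Definition sahlqvist_qe (phis : list fm) (y z : nat) : Prop :=
  0 < length phis /\ y <> z /\
  (forall f, In f phis -> occurs y f = false /\ occurs z f = false) /\
  (forall f, In f phis -> sahl_body f).

Definition qe_in_lang (L : conn -> bool) (phis : list fm) : Prop :=
  forall f, In f phis -> in_lang L f = true.

Fixpoint evalf {T : Type} (mt jn im : T -> T -> T) (ng : T -> T) (b t : T)
  (v : nat -> T) (f : fm) : T :=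
  match f with
  | Var n => v n
  | And a c => mt (evalf mt jn im ng b t v a) (evalf mt jn im ng b t v c)
  | Or a c => jn (evalf mt jn im ng b t v a) (evalf mt jn im ng b t v c)
  | Imp a c => im (evalf mt jn im ng b t v a) (evalf mt jn im ng b t v c)
  | Not a => ng (evalf mt jn im ng b t v a)
  | Bot => b
  | Top => t
  end.

Record HA : Type := {
  hcar :> Type;
  hmeet : hcar -> hcar -> hcar;
  hjoin : hcar -> hcar -> hcar;
  himp : hcar -> hcar -> hcar;
  hneg : hcar -> hcar;
  hbot : hcar;
  htop : hcar;
  hmeetC : forall a b, hmeet a b = hmeet b a;
  hmeetA : forall a b c, hmeet a (hmeet b c) = hmeet (hmeet a b) c;
  hjoinC : forall a b, hjoin a b = hjoin b a;
  hjoinA : forall a b c, hjoin a (hjoin b c) = hjoin (hjoin a b) c;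
  hmeet_join : forall a b, hmeet a (hjoin a b) = a;
  hjoin_meet : forall a b, hjoin a (hmeet a b) = a;
  hmeet_top : forall a, hmeet a htop = a;
  hjoin_bot : forall a, hjoin a hbot = a;
  himpP : forall a b c, hmeet (hmeet c a) b = hmeet c a <-> hmeet c (himp a b) = c;
  hnegE : forall a, hneg a = himp a hbot
}.

Definition hle (H : HA) (a b : H) : Prop := hmeet H a b = a.

Definition evalH (H : HA) (v : nat -> H) (f : fm) : H :=
  evalf (hmeet H) (hjoin H) (himp H) (hneg H) (hbot H) (htop H) v f.

(* S is (the universe of) a subalgebra of the L-reduct of H *)
Definition subreduct (L : conn -> bool) (H : HA) (S : H -> Prop) : Prop :=
  (exists a, S a) /\
  (L cAnd = true -> forall a b, S a -> S b -> S (hmeet H a b)) /\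
  (L cOr = true -> forall a b, S a -> S b -> S (hjoin H a b)) /\
  (L cImp = true -> forall a b, S a -> S b -> S (himp H a b)) /\
  (L cNot = true -> forall a, S a -> S (hneg H a)) /\
  (L c0 = true -> S (hbot H)) /\
  (L c1 = true -> S (htop H)).

(* A |= Phi, for A the L-subreduct with universe S (the operations of A are
   the restrictions of those of H, so evaluation can be done in H) *)
Definition alg_sat (H : HA) (S : H -> Prop) (phis : list fm) (y z : nat) : Prop :=
  forall v : nat -> H, (forall n, S (v n)) ->
    (forall f, In f phis -> hle H (hmeet H (evalH H v f) (v y)) (v z)) ->
    hle H (v y) (v z).

Record Poset : Type := {
  pcar :> Type;
  ple : pcar -> pcar -> Prop;
  ple_refl : forall x, ple x x;
  ple_antisym : forall x y, ple x y -> ple y x -> x = y;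
  ple_trans : forall x y z, ple x y -> ple y z -> ple x z
}.

Definition is_upset (X : Poset) (U : X -> Prop) : Prop :=
  forall x y, ple X x y -> U x -> U y.

Definition up_meet (X : Poset) (U V : X -> Prop) : X -> Prop := fun x => U x /\ V x.
Definition up_join (X : Poset) (U V : X -> Prop) : X -> Prop := fun x => U x \/ V x.
Definition up_imp (X : Poset) (U V : X -> Prop) : X -> Prop :=
  fun x => ~ exists y, ple X x y /\ U y /\ ~ V y.
Definition up_bot (X : Poset) : X -> Prop := fun _ => False.
Definition up_top (X : Poset) : X -> Prop := fun _ => True.
Definition up_neg (X : Poset) (U : X -> Prop) : X -> Prop := up_imp X U (up_bot X).

Definition evalUp (X : Poset) (v : nat -> X -> Prop) (f : fm) : X -> Prop :=
  evalf (up_meet X) (up_join X) (up_imp X) (up_neg X) (up_bot X) (up_top X) v f.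

(* Up(X) |= Phi  (U <= V in Up(X), i.e. U /\ V = U, is inclusion) *)
Definition up_sat (X : Poset) (phis : list fm) (y z : nat) : Prop :=
  forall v : nat -> X -> Prop, (forall n, is_upset X (v n)) ->
    (forall f, In f phis -> forall x, up_meet X (evalUp X v f) (v y) x -> v z x) ->
    forall x, v y x -> v z x.

Inductive fo : Type :=
| FLe : nat -> nat -> fo
| FEq : nat -> nat -> fo
| FFalse : fo
| FNot : fo -> fo
| FAnd : fo -> fo -> fo
| FOr : fo -> fo -> fo
| FImp : fo -> fo -> fo
| FAll : nat -> fo -> fo
| FEx : nat -> fo -> fo.

Definition upd {T : Type} (e : nat -> T) (n : nat) (x : T) : nat -> T :=
  fun m => if Nat.eqb m n then x else e m.

Fixpoint fo_eval (X : Poset) (e : nat -> X) (p : fo) : Prop :=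
  match p with
  | FLe i j => ple X (e i) (e j)
  | FEq i j => e i = e j
  | FFalse => False
  | FNot a => ~ fo_eval X e a
  | FAnd a b => fo_eval X e a /\ fo_eval X e b
  | FOr a b => fo_eval X e a \/ fo_eval X e b
  | FImp a b => fo_eval X e a -> fo_eval X e b
  | FAll n a => forall x : X, fo_eval X (upd e n x) a
  | FEx n a => exists x : X, fo_eval X (upd e n x) a
  end.

Fixpoint fo_free (n : nat) (p : fo) : bool :=
  match p with
  | FLe i j | FEq i j => Nat.eqb n i || Nat.eqb n j
  | FFalse => false
  | FNot a => fo_free n a
  | FAnd a b | FOr a b | FImp a b => fo_free n a || fo_free n b
  | FAll m a | FEx m a => negb (Nat.eqb n m) && fo_free n a
  end.

Definition fo_sentence (p : fo) : Prop := forall n, fo_free n p = false.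

Definition fo_sat (X : Poset) (p : fo) : Prop := forall e : nat -> X, fo_eval X e p.

Definition set_eq {T : Type} (F G : T -> Prop) : Prop := forall a, F a <-> G a.

Definition is_filter (H : HA) (S : H -> Prop) (F : H -> Prop) : Prop :=
  (forall a, F a -> S a) /\
  (exists a, F a) /\
  (forall a b, F a -> S b -> hle H a b -> F b) /\
  (forall a b, F a -> F b -> F (hmeet H a b)).

Definition meet_irreducible (H : HA) (S : H -> Prop) (F : H -> Prop) : Prop :=
  is_filter H S F /\
  (exists a, S a /\ ~ F a) /\
  ~ (exists G1 G2, is_filter H S G1 /\ is_filter H S G2 /\
       ~ set_eq G1 F /\ ~ set_eq G2 F /\
       set_eq F (fun a => G1 a /\ G2 a)).

Definition mif (H : HA) (S : H -> Prop) : Type :=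
  { F : H -> Prop | meet_irreducible H S F }.

Definition mif_le (H : HA) (S : H -> Prop) (F G : mif H S) : Prop :=
  forall a, proj1_sig F a -> proj1_sig G a.

Lemma mif_le_refl H S (F : mif H S) : mif_le H S F F.
Proof. intros a h; exact h. Qed.

Lemma mif_le_trans H S (F G K : mif H S) :
  mif_le H S F G -> mif_le H S G K -> mif_le H S F K.
Proof. intros h1 h2 a h; apply h2, h1, h. Qed.

Lemma mif_le_antisym H S (F G : mif H S) :
  mif_le H S F G -> mif_le H S G F -> F = G.
Proof.
  destruct F as [F hF], G as [G hG]; simpl; unfold mif_le; simpl; intros h1 h2.
  assert (F = G) as ->.
  { apply functional_extensionality; intro a;
    apply propositional_extensionality; split; auto. }
  f_equal; apply proof_irrelevance.
Qed.

Definition dual_poset (H : HA) (S : H -> Prop) : Poset :=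
  {| pcar := mif H S; ple := mif_le H S;
     ple_refl := mif_le_refl H S;
     ple_antisym := mif_le_antisym H S;
     ple_trans := mif_le_trans H S |}.

(* The map [stone] sending [a] to the set of meet irreducible filters containing it is a
   homomorphism for the operations of L into Up(A_* ) and separates elements, so Phi transfers
   from Up(A_* ) back to A.
   Conversely, let an upset valuation [v] refute Phi at a point [x0]. As Phi is Sahlqvist,
   finitely many points [Ls] above [x0] already witness the refutation, so [v] can be shrunk to
   the valuation generated by [Ls], and then replaced by the closed valuation
   [x |-> F_p <= x], where [F_p] is the intersection of the points of [Ls] in [v p]. The two
   coincide when L has -> or \/, and otherwise agree at [x0] and on pseudocomplements, which is
   enough for the {/\, ~, 0, 1} fragment. By Esakia's lemma a positive formula failing at a point
   under the closed valuation fails under some algebra valuation [w] with [w p] in [F_p], and a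
   negative one holding there holds under some such [w]. This gives [w] with every [phi_i(w)]
   outside [x0]; meet irreducibility of [x0] then yields [f] in [x0] and [e] outside it with
   [phi_i(w) /\ f <= e], and sending [y] to [f] and [z] to [e] refutes Phi in A. *)

From Stdlib Require Import List Bool Classical PeanoNat.
From mathcomp Require classical_sets.
Import ListNotations.

Section HeytingFacts.
Variable H : HA.
Notation le := (hle H).
Notation mt := (hmeet H).
Notation jn := (hjoin H).
Notation im := (himp H).

Lemma hmeet_idem a : mt a a = a.
Proof. rewrite <- (hjoin_meet H a a) at 2; apply hmeet_join. Qed.

Lemma hle_refl a : le a a.
Proof. apply hmeet_idem. Qed.

Lemma hle_trans a b c : le a b -> le b c -> le a c.
Proof. unfold hle; intros hab hbc; rewrite <- hab, <- hmeetA, hbc; reflexivity. Qed.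

Lemma hle_antisym a b : le a b -> le b a -> a = b.
Proof. unfold hle; intros hab hba; rewrite <- hab, hmeetC; exact hba. Qed.

Lemma hle_joinE a b : le a b <-> jn a b = b.
Proof.
  unfold hle; split; intro h; rewrite <- h.
  - rewrite hjoinC, hmeetC; apply hjoin_meet.
  - apply hmeet_join.
Qed.

Lemma hle_meetl a b : le (mt a b) a.
Proof. unfold hle; rewrite (hmeetC _ a b), <- hmeetA, hmeet_idem; reflexivity. Qed.

Lemma hle_meetr a b : le (mt a b) b.
Proof. rewrite hmeetC; apply hle_meetl. Qed.

Lemma hle_meet a b c : le c a -> le c b -> le c (mt a b).
Proof. unfold hle; intros hca hcb; rewrite hmeetA, hca; exact hcb. Qed.

Lemma hle_joinl a b : le a (jn a b).
Proof. apply hmeet_join. Qed.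

Lemma hle_joinr a b : le b (jn a b).
Proof. rewrite hjoinC; apply hle_joinl. Qed.

Lemma hle_join a b c : le a c -> le b c -> le (jn a b) c.
Proof.
  rewrite !hle_joinE; intros hac hbc; rewrite <- hjoinA, hbc; exact hac.
Qed.

Lemma hmeet_mono a b c d : le a c -> le b d -> le (mt a b) (mt c d).
Proof.
  intros hac hbd; apply hle_meet.
  - exact (hle_trans _ _ _ (hle_meetl a b) hac).
  - exact (hle_trans _ _ _ (hle_meetr a b) hbd).
Qed.

Lemma hjoin_mono a b c d : le a c -> le b d -> le (jn a b) (jn c d).
Proof.
  intros hac hbd; apply hle_join.
  - exact (hle_trans _ _ _ hac (hle_joinl c d)).
  - exact (hle_trans _ _ _ hbd (hle_joinr c d)).
Qed.

Lemma hbot_le a : le (hbot H) a.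
Proof. apply hle_joinE; rewrite hjoinC; apply hjoin_bot. Qed.

Lemma hle_top a : le a (htop H).
Proof. apply hmeet_top. Qed.

Lemma himp_adj a b c : le (mt c a) b <-> le c (im a b).
Proof. apply himpP. Qed.

Lemma himp_mp a b : le (mt a (im a b)) b.
Proof. rewrite hmeetC; apply himp_adj, hle_refl. Qed.

Lemma himp_mono a b c d : le c a -> le b d -> le (im a b) (im c d).
Proof.
  intros hca hbd; apply himp_adj.
  apply (hle_trans _ (mt a (im a b))); [|exact (hle_trans _ _ _ (himp_mp a b) hbd)].
  rewrite (hmeetC _ _ c); apply hmeet_mono; [exact hca|apply hle_refl].
Qed.

Lemma hneg_mono a c : le c a -> le (hneg H a) (hneg H c).
Proof. intro hca; rewrite !hnegE; apply himp_mono; [exact hca|apply hle_refl]. Qed.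

Lemma hmeet_neg a : le (mt a (hneg H a)) (hbot H).
Proof. rewrite hnegE; apply himp_mp. Qed.

Lemma hmeet_joinl_le a b c : le (mt (jn a b) c) (jn (mt a c) (mt b c)).
Proof.
  apply himp_adj, hle_join; apply himp_adj; [apply hle_joinl|apply hle_joinr].
Qed.

End HeytingFacts.

Lemma evalH_mono (H : HA) (w w' : nat -> H) :
  (forall n, hle H (w n) (w' n)) -> forall f,
  (positive f = true -> hle H (evalH H w f) (evalH H w' f)) /\
  (negative f = true -> hle H (evalH H w' f) (evalH H w f)).
Proof.
  intros hw f; induction f as [n|a [pa na] b [pb nb]|a [pa na] b [pb nb]|a [pa na] b [pb nb]|a [pa na]| |];
    simpl; split; intro hf; try discriminate;
    repeat match goal with h : _ && _ = true |- _ => apply andb_prop in h; destruct h end.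
  all: first [ apply hw | apply hle_refl | apply hmeet_mono; auto | apply hjoin_mono; auto
             | apply himp_mono; auto | apply hneg_mono; auto ].
Qed.

Lemma evalH_ext (H : HA) (w w' : nat -> H) f :
  (forall n, occurs n f = true -> w n = w' n) -> evalH H w f = evalH H w' f.
Proof.
  unfold evalH; induction f; simpl; intro h; try reflexivity.
  - apply h, Nat.eqb_refl.
  all: try (rewrite IHf; [reflexivity|exact h]).
  all: rewrite IHf1, IHf2; [reflexivity| |]; intros n hn; apply h; rewrite hn;
       [apply orb_true_r|reflexivity].
Qed.

Lemma evalH_upd_fresh (H : HA) (w : nat -> H) n a f :
  occurs n f = false -> evalH H (upd w n a) f = evalH H w f.
Proof.
  intro hn; apply evalH_ext; intros m hm; unfold upd.
  destruct (Nat.eqb_spec m n); [subst; congruence|reflexivity].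
Qed.

Lemma in_lang_sub (L L' : conn -> bool) f :
  (forall c, L c = true -> L' c = true) -> in_lang L f = true -> in_lang L' f = true.
Proof.
  intro hLL'; induction f; cbn; intro hf;
    repeat match goal with h : _ && _ = true |- _ => apply andb_prop in h as [? ?] end;
    rewrite ?andb_true_iff; auto.
Qed.

Lemma evalH_Not (H : HA) (w : nat -> H) a : evalH H w (Not a) = evalH H w (Imp a Bot).
Proof. apply hnegE. Qed.

Definition meet_neg_lang (c : conn) : bool :=
  match c with cOr | cImp => false | _ => true end.

Section Upsets.
Variable X : Poset.

Lemma evalUp_mono (V V' : nat -> X -> Prop) :
  (forall n x, V n x -> V' n x) -> forall f,
  (positive f = true -> forall x, evalUp X V f x -> evalUp X V' f x) /\
  (negative f = true -> forall x, evalUp X V' f x -> evalUp X V f x).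
Proof.
  intros hV f; induction f as [n|a [pa na] b [pb nb]|a [pa na] b [pb nb]|a [pa na] b [pb nb]|a [pa na]| |];
    simpl; split; intro hf; try discriminate;
    repeat match goal with h : _ && _ = true |- _ => apply andb_prop in h; destruct h end;
    unfold evalUp in *; simpl; unfold up_meet, up_join, up_neg, up_imp, up_bot, up_top;
    intro x; try tauto.
  all: first [ apply hV | intros [h1 h2]; split; auto | intros [h1|h2]; [left|right]; auto
             | intros hx [y [hxy [h1 h2]]]; apply hx; exists y; repeat split; auto ].
Qed.

Lemma up_imp_ext (U U' W W' : X -> Prop) :
  (forall x, U x <-> U' x) -> (forall x, W x <-> W' x) ->
  forall x, up_imp X U W x <-> up_imp X U' W' x.
Proof.
  intros hU hW x; unfold up_imp.
  split; intros h [y hy]; apply h; exists y; rewrite ?hU, ?hW in *; tauto.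
Qed.

Lemma evalUp_ext (V V' : nat -> X -> Prop) :
  (forall n x, V n x <-> V' n x) -> forall f x, evalUp X V f x <-> evalUp X V' f x.
Proof.
  intros hV f; unfold evalUp; induction f; intro x; simpl;
    unfold up_meet, up_join, up_neg, up_bot, up_top; try tauto.
  - apply hV.
  - rewrite IHf1, IHf2; tauto.
  - rewrite IHf1, IHf2; tauto.
  - apply up_imp_ext; assumption.
  - apply up_imp_ext; [assumption|reflexivity].
Qed.

Lemma evalUp_upset (V : nat -> X -> Prop) :
  (forall n, is_upset X (V n)) -> forall f, is_upset X (evalUp X V f).
Proof.
  intros hV f; unfold evalUp; induction f; intros x y hxy; simpl;
    unfold up_meet, up_join, up_neg, up_imp, up_bot, up_top; auto.
  - apply hV, hxy.
  - intros [h1 h2]; split; [eapply IHf1|eapply IHf2]; eauto.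
  - intros [h1|h2]; [left; eapply IHf1|right; eapply IHf2]; eauto.
  - intros h [u [hyu hu]]; apply h; exists u; split; [eapply ple_trans; eauto|exact hu].
  - intros h [u [hyu hu]]; apply h; exists u; split; [eapply ple_trans; eauto|exact hu].
Qed.

Lemma up_negE (U : X -> Prop) x : up_neg X U x <-> ~ exists y, ple X x y /\ U y.
Proof. unfold up_neg, up_imp, up_bot; split; intros h [y hy]; apply h; exists y; tauto. Qed.

Lemma up_neg_ext (U U' : X -> Prop) :
  (forall x, U x <-> U' x) -> forall x, up_neg X U x <-> up_neg X U' x.
Proof. intros hU; apply up_imp_ext; [exact hU|reflexivity]. Qed.

Lemma up_neg_meet (U W : X -> Prop) : is_upset X U -> is_upset X W -> forall x,
  up_neg X (up_meet X U W) x <->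
  up_neg X (up_meet X (up_neg X (up_neg X U)) (up_neg X (up_neg X W))) x.
Proof.
  intros hU hW x; unfold up_meet; rewrite !up_negE; split.
  - intros h [y [hxy [hnnU hnnW]]]; rewrite up_negE in hnnU, hnnW.
    assert (hz : exists z, ple X y z /\ U z).
    { apply NNPP; intro hn; apply hnnU; exists y; split; [apply ple_refl|apply up_negE, hn]. }
    destruct hz as [z [hyz hz]].
    assert (hu : exists u, ple X z u /\ W u).
    { apply NNPP; intro hn; apply hnnW; exists z; split; [exact hyz|apply up_negE, hn]. }
    destruct hu as [u [hzu hu]]; apply h; exists u; split; [|split; [exact (hU z u hzu hz)|exact hu]].
    exact (ple_trans X _ _ _ hxy (ple_trans X _ _ _ hyz hzu)).
  - intros h [y [hxy [hy1 hy2]]]; apply h; exists y; split; [exact hxy|].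
    split; rewrite up_negE; intros [z [hyz hz]]; rewrite up_negE in hz; apply hz;
      exists z; (split; [apply ple_refl|]); [exact (hU y z hyz hy1)|exact (hW y z hyz hy2)].
Qed.

Lemma up_neg_evalUp_ext (V V' : nat -> X -> Prop) :
  (forall n, is_upset X (V n)) -> (forall n, is_upset X (V' n)) ->
  (forall n x, up_neg X (V n) x <-> up_neg X (V' n) x) ->
  forall f, in_lang meet_neg_lang f = true ->
  forall x, up_neg X (evalUp X V f) x <-> up_neg X (evalUp X V' f) x.
Proof.
  intros hV hV' hVV' f; induction f; cbn [in_lang meet_neg_lang]; intro hf; try discriminate.
  - apply hVV'.
  - apply andb_prop in hf as [[_ h1]%andb_prop h2]; intro x.
    rewrite (up_neg_meet _ _ (evalUp_upset V hV f1) (evalUp_upset V hV f2)).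
    rewrite (up_neg_meet _ _ (evalUp_upset V' hV' f1) (evalUp_upset V' hV' f2)).
    apply up_neg_ext; intro y; unfold up_meet.
    rewrite (up_neg_ext _ _ (IHf1 h1) y), (up_neg_ext _ _ (IHf2 h2) y); reflexivity.
  - apply andb_prop in hf as [_ h]; apply up_neg_ext, IHf, h.
  - reflexivity.
  - reflexivity.
Qed.

End Upsets.

(** * Filters of a meet-closed subset *)

Section Filters.
Variables (H : HA) (S : H -> Prop).
Hypothesis S_meet : forall a b, S a -> S b -> S (hmeet H a b).
Notation le := (hle H).
Notation mt := (hmeet H).
Notation filter := (is_filter H S).
Notation mi := (meet_irreducible H S).

Lemma filter_sub F a : filter F -> F a -> S a.
Proof. intros [h _]; apply h. Qed.

Lemma filter_nonempty F : filter F -> exists a, F a.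
Proof. intros [_ [h _]]; exact h. Qed.

Lemma filter_up F a b : filter F -> F a -> S b -> le a b -> F b.
Proof. intros [_ [_ [h _]]]; apply h. Qed.

Lemma filter_meet F a b : filter F -> F a -> F b -> F (mt a b).
Proof. intros [_ [_ [_ h]]]; apply h. Qed.

Lemma filter_ext F G : (forall a, F a <-> G a) -> filter F -> filter G.
Proof.
  intros e [hS [[a ha] [hup hmt]]]; split; [|split; [|split]].
  - intros b hb; apply hS, e, hb.
  - exists a; apply e, ha.
  - intros b c hb hc hbc; apply e, (hup b); auto; apply e, hb.
  - intros b c hb hc; apply e, hmt; apply e; assumption.
Qed.

Definition principal (a : H) : H -> Prop := fun c => S c /\ le a c.

Lemma principal_filter a : S a -> filter (principal a).
Proof.
  intro ha; split; [|split; [|split]].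
  - intros c [hc _]; exact hc.
  - exists a; split; [exact ha|apply hle_refl].
  - intros b c [_ hab] hc hbc; split; [exact hc|exact (hle_trans _ _ _ _ hab hbc)].
  - intros b c [hb hab] [hc hac]; split; [apply S_meet; auto|apply hle_meet; auto].
Qed.

Lemma principal_self a : S a -> principal a a.
Proof. split; [assumption|apply hle_refl]. Qed.

Definition filter_join (F G : H -> Prop) : H -> Prop :=
  fun c => S c /\ exists f g, F f /\ G g /\ le (mt f g) c.

Lemma filter_join_filter F G : filter F -> filter G -> filter (filter_join F G).
Proof.
  intros hF hG; split; [|split; [|split]].
  - intros c [hc _]; exact hc.
  - destruct (filter_nonempty F hF) as [f hf], (filter_nonempty G hG) as [g hg].
    exists (mt f g); split; [apply S_meet; [apply (filter_sub F)|apply (filter_sub G)]; auto|].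
    exists f, g; repeat split; auto; apply hle_refl.
  - intros b c [_ [f [g [hf [hg hb]]]]] hc hbc; split; [exact hc|].
    exists f, g; repeat split; auto; exact (hle_trans _ _ _ _ hb hbc).
  - intros b c [hb [f [g [hf [hg l]]]]] [hc [f' [g' [hf' [hg' l']]]]].
    split; [apply S_meet; auto|].
    exists (mt f f'), (mt g g'); split; [apply filter_meet; auto|].
    split; [apply filter_meet; auto|].
    apply hle_meet.
    + apply (hle_trans _ _ _ _ (hmeet_mono _ _ _ _ _ (hle_meetl _ f f') (hle_meetl _ g g')) l).
    + apply (hle_trans _ _ _ _ (hmeet_mono _ _ _ _ _ (hle_meetr _ f f') (hle_meetr _ g g')) l').
Qed.

Lemma filter_join_l F G a : filter F -> filter G -> F a -> filter_join F G a.
Proof.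
  intros hF hG ha; split; [exact (filter_sub F a hF ha)|].
  destruct (filter_nonempty G hG) as [g hg]; exists a, g; repeat split; auto; apply hle_meetl.
Qed.

Lemma filter_join_r F G a : filter F -> filter G -> G a -> filter_join F G a.
Proof.
  intros hF hG ha; split; [exact (filter_sub G a hG ha)|].
  destruct (filter_nonempty F hF) as [f hf]; exists f, a; repeat split; auto; apply hle_meetr.
Qed.

Lemma mi_filter G : mi G -> filter G.
Proof. intros [h _]; exact h. Qed.

Lemma mi_not_least G c : mi G -> (forall s, S s -> le c s) -> ~ G c.
Proof.
  intros [hG [[a [ha hna]] _]] hc hGc; exact (hna (filter_up G c a hG hGc ha (hc a ha))).
Qed.

(* The elements above [c_i /\ f] for some [f] in [G] form the join of [G] with the principal
   filter of [c_i]; by irreducibility the two joins cannot meet exactly in [G]. *)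
Lemma mi_outside_bound2 G c1 c2 : mi G -> S c1 -> S c2 -> ~ G c1 -> ~ G c2 ->
  exists f z, G f /\ S z /\ ~ G z /\ le (mt c1 f) z /\ le (mt c2 f) z.
Proof.
  intros [hG [_ hirr]] h1 h2 n1 n2; apply NNPP; intro hno; apply hirr.
  assert (hj1 := filter_join_filter G _ hG (principal_filter c1 h1)).
  assert (hj2 := filter_join_filter G _ hG (principal_filter c2 h2)).
  exists (filter_join G (principal c1)), (filter_join G (principal c2)).
  split; [exact hj1|split; [exact hj2|split; [|split]]].
  - intro e; apply n1, e, filter_join_r, principal_self; auto using principal_filter.
  - intro e; apply n2, e, filter_join_r, principal_self; auto using principal_filter.
  - intro a; split.
    + intro ha; split; apply filter_join_l; auto using principal_filter.
    + intros [[ha [f1 [g1 [hf1 [[_ hg1] l1]]]]] [_ [f2 [g2 [hf2 [[_ hg2] l2]]]]]].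
      apply NNPP; intro hna; apply hno; exists (mt f1 f2), a.
      split; [apply filter_meet; auto|split; [exact ha|split; [exact hna|split]]].
      * refine (hle_trans _ _ _ _ _ l1); rewrite (hmeetC _ f1 g1).
        apply hmeet_mono; [exact hg1|apply hle_meetl].
      * refine (hle_trans _ _ _ _ _ l2); rewrite (hmeetC _ f2 g2).
        apply hmeet_mono; [exact hg2|apply hle_meetr].
Qed.

Lemma mi_outside_bound G cs : mi G -> (forall c, In c cs -> S c /\ ~ G c) ->
  exists f z, G f /\ S z /\ ~ G z /\ forall c, In c cs -> le (mt c f) z.
Proof.
  intro hG; induction cs as [|c cs IH]; intro hcs.
  - destruct (filter_nonempty G (mi_filter G hG)) as [f hf].
    destruct hG as [_ [[z [hz nz]] _]].
    exists f, z; repeat split; auto; intros c [].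
  - destruct IH as [f1 [z1 [hf1 [hz1 [nz1 hle1]]]]]; [intros d hd; apply hcs; right; exact hd|].
    destruct (hcs c (or_introl eq_refl)) as [hc nc].
    destruct (mi_outside_bound2 G c z1 hG hc hz1 nc nz1) as [f2 [z [hf2 [hz [nz [l1 l2]]]]]].
    exists (mt f1 f2), z; split; [apply filter_meet; auto using mi_filter|].
    split; [exact hz|split; [exact nz|]].
    intros d [<-|hd].
    + refine (hle_trans _ _ _ _ _ l1); apply hmeet_mono; [apply hle_refl|apply hle_meetr].
    + refine (hle_trans _ _ _ _ _ l2); rewrite hmeetA.
      apply hmeet_mono; [exact (hle1 d hd)|apply hle_refl].
Qed.

Section Extension.
Variables (K D : H -> Prop).
Hypothesis K_filter : filter K.
Hypothesis K_D : forall d, D d -> ~ K d.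

(* [Zorn_bigcup] also bounds the empty chain, hence the candidates are the sets [A] for which
   [K \/ A] is a filter, rather than the filters containing [K]. *)
Lemma filter_maximal_avoiding : exists M, filter M /\ (forall a, K a -> M a) /\
  (forall d, D d -> ~ M d) /\
  (forall G, filter G -> (forall a, M a -> G a) -> (forall d, D d -> ~ G d) -> forall a, G a -> M a).
Proof.
  pose (P := fun A : H -> Prop => filter (fun a => K a \/ A a) /\ forall d, D d -> ~ A d).
  destruct (@classical_sets.Zorn_bigcup H P) as [A [[hA hAD] Amax]].
  - intros C hCP hC; split.
    + split; [|split; [|split]].
      * intros a [ha|[B hB ha]]; [eapply filter_sub; eauto|].
        apply (filter_sub _ a (proj1 (hCP B hB))); right; exact ha.
      * destruct (filter_nonempty K K_filter) as [a ha]; exists a; left; exact ha.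
      * intros a b [ha|[B hB ha]] hb hab.
        -- left; exact (filter_up K a b K_filter ha hb hab).
        -- destruct (filter_up _ a b (proj1 (hCP B hB)) (or_intror ha) hb hab); [left|right]; auto.
           exists B; auto.
      * assert (inC : forall B a, C B -> K a \/ B a -> K a \/ (exists2 B, C B & B a))
          by (intros B a hB [ha|ha]; [left|right; exists B]; auto).
        intros a b [ha|[B hB ha]] [hb|[B' hB' hb]].
        -- left; apply filter_meet; auto.
        -- apply (inC B'); auto; apply filter_meet; [exact (proj1 (hCP B' hB'))|left|right]; auto.
        -- apply (inC B); auto; apply filter_meet; [exact (proj1 (hCP B hB))|right|left]; auto.
        -- destruct (hC B B' hB hB') as [hBB'|hB'B].
           ++ apply (inC B'); auto; apply filter_meet; [exact (proj1 (hCP B' hB'))|right|right]; auto.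
           ++ apply (inC B); auto; apply filter_meet; [exact (proj1 (hCP B hB))|right|right]; auto.
    + intros d hd [B hB hBd]; exact (proj2 (hCP B hB) d hd hBd).
  - exists (fun a => K a \/ A a); split; [exact hA|split; [intros a ha; left; exact ha|split]].
    + intros d hd [hKd|hAd]; [exact (K_D d hd hKd)|exact (hAD d hd hAd)].
    + intros G hG hMG hGD a hGa; right; apply NNPP; intro hna.
      apply (Amax G); [split; [intros b hb; apply hMG; right; exact hb|intro hGA; exact (hna (hGA a hGa))]|].
      split; [|exact hGD].
      refine (filter_ext G _ _ hG); intro b.
      split; [intro hb; right; exact hb|intros [hb|hb]; auto].
Qed.

Lemma mi_extend : (exists d, D d) -> (forall d, D d -> S d) ->
  (forall d1 d2, D d1 -> D d2 -> exists d, D d /\ le d1 d /\ le d2 d) ->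
  exists G, mi G /\ (forall a, K a -> G a) /\ (forall d, D d -> ~ G d).
Proof.
  intros [d0 hd0] hDS hDdir.
  destruct filter_maximal_avoiding as [M [hM [hKM [hMD Mmax]]]].
  exists M; split; [|split; assumption].
  split; [exact hM|split; [exists d0; split; [apply hDS|apply hMD]; exact hd0|]].
  intros [G1 [G2 [g1 [g2 [n1 [n2 e]]]]]].
  assert (meets_D : forall G, filter G -> ~ set_eq G M -> (forall a, M a -> G a) ->
            exists d, D d /\ G d).
  { intros G hG nG hMG; apply NNPP; intro hno; apply nG; intro a; split; [|apply hMG].
    apply Mmax; [exact hG|exact hMG|intros d hd hGd; apply hno; exists d; auto]. }
  destruct (meets_D G1 g1 n1) as [d1 [hd1 hG1]]; [intros a ha; apply (proj1 (e a) ha)|].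
  destruct (meets_D G2 g2 n2) as [d2 [hd2 hG2]]; [intros a ha; apply (proj1 (e a) ha)|].
  destruct (hDdir d1 d2 hd1 hd2) as [d [hd [l1 l2]]].
  apply (hMD d hd), e; split.
  - exact (filter_up G1 d1 d g1 hG1 (hDS d hd) l1).
  - exact (filter_up G2 d2 d g2 hG2 (hDS d hd) l2).
Qed.

End Extension.

Lemma mi_extend_avoid K d : filter K -> S d -> ~ K d ->
  exists G, mi G /\ (forall a, K a -> G a) /\ ~ G d.
Proof.
  intros hK hd nd.
  destruct (mi_extend K (eq d) hK) as [G [hG [hKG hGd]]].
  - intros d' <-; exact nd.
  - exists d; reflexivity.
  - intros d' <-; exact hd.
  - intros d1 d2 <- <-; exists d; split; [reflexivity|split; apply hle_refl].
  - exists G; split; [exact hG|split; [exact hKG|exact (hGd d eq_refl)]].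
Qed.

Lemma mi_separate a b : S a -> S b -> ~ le a b -> exists G, mi G /\ G a /\ ~ G b.
Proof.
  intros ha hb nab.
  destruct (mi_extend_avoid (principal a) b (principal_filter a ha) hb) as [G [hG [hKG nG]]].
  - intros [_ hab]; exact (nab hab).
  - exists G; split; [exact hG|split; [apply hKG, principal_self, ha|exact nG]].
Qed.

Lemma mi_prime G a b : mi G -> S a -> S b -> S (hjoin H a b) -> G (hjoin H a b) -> G a \/ G b.
Proof.
  intros hG ha hb hab hj; apply NNPP; intro hn.
  destruct (mi_outside_bound2 G a b hG ha hb) as [f [z [hf [hz [nz [l1 l2]]]]]];
    [intro h; apply hn; left; exact h|intro h; apply hn; right; exact h|].
  apply nz, (filter_up G (mt (hjoin H a b) f) z (mi_filter G hG)); [|exact hz|].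
  - apply filter_meet; [apply mi_filter|..]; assumption.
  - exact (hle_trans _ _ _ _ (hmeet_joinl_le _ a b f) (hle_join _ _ _ _ l1 l2)).
Qed.

End Filters.

(** * The dual poset of meet irreducible filters *)

Section DualSpace.
Variables (L : conn -> bool) (H : HA) (S : H -> Prop).
Hypothesis HS : subreduct L H S.
Hypothesis HL : L cAnd = true.
Notation le := (hle H).
Notation mt := (hmeet H).
Notation jn := (hjoin H).
Notation im := (himp H).
Notation X := (dual_poset H S).

Lemma subreduct_meet a b : S a -> S b -> S (mt a b).
Proof. destruct HS as (_ & hmeet & _); exact (hmeet HL a b). Qed.

Lemma subreduct_join a b : L cOr = true -> S a -> S b -> S (jn a b).
Proof. destruct HS as (_ & _ & hjoin & _); exact (fun h => hjoin h a b). Qed.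

Lemma subreduct_imp a b : L cImp = true -> S a -> S b -> S (im a b).
Proof. destruct HS as (_ & _ & _ & himp & _); exact (fun h => himp h a b). Qed.

Lemma subreduct_neg a : L cNot = true -> S a -> S (hneg H a).
Proof. destruct HS as (_ & _ & _ & _ & hneg & _); exact (fun h => hneg h a). Qed.

Lemma subreduct_bot_of_neg : L cNot = true -> S (hbot H).
Proof.
  intro hN; destruct HS as [[a ha] _].
  replace (hbot H) with (mt a (hneg H a)) by (apply hle_antisym; [apply hmeet_neg|apply hbot_le]).
  apply subreduct_meet; [exact ha|apply subreduct_neg; assumption].
Qed.

Lemma subreduct_eval f w : in_lang L f = true -> (forall n, S (w n)) -> S (evalH H w f).
Proof.
  destruct HS as (_ & hS_meet & hS_join & hS_imp & hS_neg & hS_bot & hS_top); intros hf hw.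
  unfold evalH; induction f; simpl in *;
    repeat match goal with h : _ && _ = true |- _ => apply andb_prop in h; destruct h end;
    auto.
Qed.

Definition stone (a : H) : X -> Prop := fun x => proj1_sig x a.

Definition point (G : H -> Prop) (hG : meet_irreducible H S G) : X := exist _ G hG.

Lemma point_filter (x : X) : is_filter H S (proj1_sig x).
Proof. exact (mi_filter H S (proj1_sig x) (proj2_sig x)). Qed.

Lemma stone_sub a x : stone a x -> S a.
Proof. exact (filter_sub H S _ a (point_filter x)). Qed.

Lemma stone_nonempty x : exists a, stone a x.
Proof. exact (filter_nonempty H S _ (point_filter x)). Qed.

Lemma stone_up a b x : stone a x -> S b -> le a b -> stone b x.
Proof. exact (filter_up H S _ a b (point_filter x)). Qed.

Lemma stone_meet a b x : S a -> S b -> stone (mt a b) x <-> stone a x /\ stone b x.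
Proof.
  intros ha hb; split.
  - intro h; split; eapply stone_up; eauto; [apply hle_meetl|apply hle_meetr].
  - intros [h1 h2]; exact (filter_meet H S _ a b (point_filter x) h1 h2).
Qed.

Lemma stone_least c x : (forall s, S s -> le c s) -> ~ stone c x.
Proof. exact (mi_not_least H S _ c (proj2_sig x)). Qed.

Lemma stone_upset a : is_upset X (stone a).
Proof. intros x y hxy; apply hxy. Qed.

Lemma stone_join a b x : S a -> S b -> S (jn a b) -> stone (jn a b) x <-> stone a x \/ stone b x.
Proof.
  intros ha hb hab; split.
  - exact (mi_prime H S subreduct_meet _ a b (proj2_sig x) ha hb hab).
  - intros [h|h]; eapply stone_up; eauto; [apply hle_joinl|apply hle_joinr].
Qed.

(* A point omitting [a -> b] extends, together with [a], to a point omitting [b]. *)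
Lemma stone_imp a b x : S a -> S b -> S (im a b) ->
  stone (im a b) x <-> up_imp X (stone a) (stone b) x.
Proof.
  intros ha hb hab; split.
  - intros hx [y [hxy [hya hyb]]]; apply hyb.
    apply (stone_up (mt a (im a b))); [apply stone_meet; auto; split; [exact hya|exact (hxy _ hx)]|exact hb|apply himp_mp].
  - intro hx; apply NNPP; intro nx.
    assert (hK := filter_join_filter H S subreduct_meet _ _ (point_filter x) (principal_filter H S subreduct_meet a ha)).
    destruct (mi_extend_avoid H S _ b hK hb) as [G [hG [hKG nGb]]].
    + intros [_ [f [g [hf [[_ hag] l]]]]]; apply nx, (stone_up f); [exact hf|exact hab|].
      apply himp_adj; refine (hle_trans _ _ _ _ _ l); apply hmeet_mono; [apply hle_refl|exact hag].
    + apply hx; exists (point G hG); split; [|split; [|exact nGb]].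
      * intros c hc; apply hKG, filter_join_l; auto using point_filter, principal_filter, subreduct_meet.
      * apply hKG, filter_join_r, principal_self; auto using point_filter, principal_filter, subreduct_meet.
Qed.

Lemma evalUp_stone f w : in_lang L f = true -> (forall n, S (w n)) ->
  forall x, evalUp X (fun n => stone (w n)) f x <-> stone (evalH H w f) x.
Proof.
  intros hf hw; pose proof (fun g hg => subreduct_eval g w hg hw) as hS.
  unfold evalUp; induction f; intro x; pose proof (hS _ hf) as hSf;
    cbn [in_lang] in hf; unfold evalH in *; cbn [evalf] in *.
  - reflexivity.
  - apply andb_prop in hf as [[_ h1]%andb_prop h2].
    unfold up_meet; rewrite IHf1, IHf2 by assumption.
    symmetry; apply stone_meet; apply hS; assumption.
  - apply andb_prop in hf as [[_ h1]%andb_prop h2].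
    unfold up_join; rewrite IHf1, IHf2 by assumption.
    symmetry; apply stone_join; [apply hS; assumption|apply hS; assumption|exact hSf].
  - apply andb_prop in hf as [[_ h1]%andb_prop h2].
    rewrite stone_imp; [apply up_imp_ext; auto|apply hS; assumption|apply hS; assumption|exact hSf].
  - apply andb_prop in hf as [hN h1]; rewrite hnegE in *; unfold up_neg.
    rewrite stone_imp; [|apply hS; assumption|apply subreduct_bot_of_neg, hN|exact hSf].
    apply up_imp_ext; [auto|].
    intro y; split; [intros []|apply stone_least; intros; apply hbot_le].
  - split; [intros []|apply stone_least; intros; apply hbot_le].
  - split; [intros _|intros _; exact I].
    destruct (stone_nonempty x) as [a ha]; apply (stone_up a); [exact ha|exact hSf|apply hle_top].
Qed.

Lemma alg_sat_of_up_sat phis y z : qe_in_lang L phis -> up_sat X phis y z -> alg_sat H S phis y z.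
Proof.
  intros hphis hup w hw hprem; apply NNPP; intro nle.
  destruct (mi_separate H S subreduct_meet (w y) (w z) (hw y) (hw z) nle) as [G [hG [hGy nGz]]].
  apply nGz; refine (hup (fun n => stone (w n)) (fun n => stone_upset (w n)) _ (point G hG) hGy).
  intros f hf x [h1 h2]; apply (evalUp_stone f w (hphis f hf) hw x) in h1.
  apply (stone_up (hmeet H (evalH H w f) (w y))); [apply stone_meet; auto| |apply hprem, hf].
  - apply subreduct_eval; auto.
  - apply hw.
Qed.

(** * Esakia's lemma for closed valuations *)

Section Esakia.
Variable F : nat -> H -> Prop.
Hypothesis F_filter : forall p, is_filter H S (F p).

Definition admissible (w : nat -> H) : Prop := forall p, F p (w p).
Definition closed_val (p : nat) (x : X) : Prop := forall a, F p a -> stone a x.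
Definition vmeet (w1 w2 : nat -> H) : nat -> H := fun p => mt (w1 p) (w2 p).
Definition vle (w1 w2 : nat -> H) : Prop := forall p, le (w1 p) (w2 p).
Definition S_valued (f : fm) : Prop := forall w, admissible w -> S (evalH H w f).

Variable w0 : nat -> H.
Hypothesis w0_admissible : admissible w0.

Lemma closed_val_upset p : is_upset X (closed_val p).
Proof. intros x y hxy h a ha; apply hxy, h, ha. Qed.

Lemma admissible_vmeet w1 w2 : admissible w1 -> admissible w2 -> admissible (vmeet w1 w2).
Proof. intros h1 h2 p; exact (filter_meet H S _ _ _ (F_filter p) (h1 p) (h2 p)). Qed.

Lemma vle_refl w : vle w w.
Proof. intro p; apply hle_refl. Qed.

Lemma vle_trans w1 w2 w3 : vle w1 w2 -> vle w2 w3 -> vle w1 w3.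
Proof. intros h1 h2 p; exact (hle_trans _ _ _ _ (h1 p) (h2 p)). Qed.

Lemma vmeet_vlel w1 w2 : vle (vmeet w1 w2) w1.
Proof. intro p; apply hle_meetl. Qed.

Lemma vmeet_vler w1 w2 : vle (vmeet w1 w2) w2.
Proof. intro p; apply hle_meetr. Qed.

Lemma S_valued_in_lang f : in_lang L f = true -> S_valued f.
Proof.
  intros hf w hw; apply subreduct_eval; [exact hf|].
  intro p; exact (filter_sub H S _ _ (F_filter p) (hw p)).
Qed.

Lemma evalH_vle_pos f w w' : positive f = true -> vle w w' -> le (evalH H w f) (evalH H w' f).
Proof. intros hf hw; exact (proj1 (evalH_mono H w w' hw f) hf). Qed.

Lemma evalH_vle_neg f w w' : negative f = true -> vle w w' -> le (evalH H w' f) (evalH H w f).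
Proof. intros hf hw; exact (proj2 (evalH_mono H w w' hw f) hf). Qed.

Definition refuted (f : fm) : Prop := forall x,
  ~ evalUp X closed_val f x -> exists w, admissible w /\ ~ stone (evalH H w f) x.

Definition witnessed (f : fm) : Prop := forall x,
  evalUp X closed_val f x -> exists w, admissible w /\ stone (evalH H w f) x.

Definition refuted_below (f : fm) (x : X) : Prop := exists w, admissible w /\
  forall w', admissible w' -> vle w' w -> ~ stone (evalH H w' f) x.

Definition witnessed_below (f : fm) (x : X) : Prop := exists w, admissible w /\
  forall w', admissible w' -> vle w' w -> stone (evalH H w' f) x.

Lemma refuted_below_pos f x : positive f = true -> S_valued f -> refuted f ->
  ~ evalUp X closed_val f x -> refuted_below f x.
Proof.
  intros hp hS hr hx; destruct (hr x hx) as [w [hw hn]]; exists w; split; [exact hw|].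
  intros w' hw' hle hx'; apply hn, (stone_up _ _ _ hx' (hS w hw)), evalH_vle_pos; assumption.
Qed.

Lemma witnessed_below_neg f x : negative f = true -> S_valued f -> witnessed f ->
  evalUp X closed_val f x -> witnessed_below f x.
Proof.
  intros hn hS hwit hx; destruct (hwit x hx) as [w [hw hin]]; exists w; split; [exact hw|].
  intros w' hw' hle; apply (stone_up _ _ _ hin (hS w' hw')), evalH_vle_neg; assumption.
Qed.

Lemma refuted_below_imp a b x : S_valued a -> S_valued b -> positive b = true ->
  (forall y, evalUp X closed_val a y -> witnessed_below a y) -> refuted b ->
  ~ evalUp X closed_val (Imp a b) x -> refuted_below (Imp a b) x.
Proof.
  intros hSa hSb hpb ha hb hx; apply NNPP in hx; destruct hx as [y [hxy [hya hyb]]].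
  destruct (ha y hya) as [w1 [hw1 k1]], (hb y hyb) as [w2 [hw2 k2]].
  exists (vmeet w1 w2); split; [apply admissible_vmeet; auto|].
  intros w' hw' hle hx'.
  assert (hay : stone (evalH H w' a) y)
    by (apply k1; [exact hw'|exact (vle_trans _ _ _ hle (vmeet_vlel w1 w2))]).
  apply k2, (stone_up (evalH H w' b)); [|apply hSb, hw2|].
  - apply (stone_up (mt (evalH H w' a) (evalH H w' (Imp a b)))); [|apply hSb, hw'|apply himp_mp].
    apply (stone_meet _ _ _ (hSa w' hw') (stone_sub _ _ hx')); split; [exact hay|exact (hxy _ hx')].
  - apply evalH_vle_pos; [exact hpb|exact (vle_trans _ _ _ hle (vmeet_vler w1 w2))].
Qed.

Lemma admissible_upd w p a : admissible w -> F p a -> admissible (upd w p a).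
Proof.
  intros hw ha q; unfold upd; destruct (Nat.eqb q p) eqn:e; [apply Nat.eqb_eq in e; subst q; exact ha|apply hw].
Qed.

Lemma refuted_var n : refuted (Var n).
Proof.
  intros x hx; apply not_all_ex_not in hx; destruct hx as [a hx]; apply imply_to_and in hx.
  exists (upd w0 n a); split; [apply admissible_upd; [exact w0_admissible|apply hx]|].
  unfold evalH; cbn; unfold upd; rewrite Nat.eqb_refl; apply hx.
Qed.

Lemma refuted_and a b : S_valued a -> S_valued b -> refuted a -> refuted b -> refuted (And a b).
Proof.
  intros hSa hSb ha hb x hx; apply not_and_or in hx.
  destruct hx as [hx|hx]; [destruct (ha x hx) as [w [hw hn]]|destruct (hb x hx) as [w [hw hn]]];
    exists w; split; auto; intro h; apply hn;
    apply (stone_meet _ _ x (hSa w hw) (hSb w hw)) in h; apply h.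
Qed.

Lemma refuted_or a b : positive a = true -> positive b = true ->
  S_valued a -> S_valued b -> S_valued (Or a b) -> refuted a -> refuted b -> refuted (Or a b).
Proof.
  intros hpa hpb hSa hSb hSab ha hb x hx; apply not_or_and in hx; destruct hx as [hxa hxb].
  destruct (refuted_below_pos a x hpa hSa ha hxa) as [w1 [hw1 k1]].
  destruct (refuted_below_pos b x hpb hSb hb hxb) as [w2 [hw2 k2]].
  assert (hw := admissible_vmeet w1 w2 hw1 hw2).
  exists (vmeet w1 w2); split; [exact hw|intro h].
  apply (stone_join _ _ x (hSa _ hw) (hSb _ hw) (hSab _ hw)) in h; destruct h as [h|h].
  - exact (k1 _ hw (vmeet_vlel w1 w2) h).
  - exact (k2 _ hw (vmeet_vler w1 w2) h).
Qed.

Lemma refuted_imp a b : negative a = true -> positive b = true -> S_valued a -> S_valued b ->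
  witnessed a -> refuted b -> refuted (Imp a b).
Proof.
  intros hna hpb hSa hSb ha hb x hx.
  destruct (refuted_below_imp a b x hSa hSb hpb (fun y => witnessed_below_neg a y hna hSa ha) hb hx)
    as [w [hw k]].
  exists w; split; [exact hw|exact (k w hw (vle_refl w))].
Qed.

Lemma refuted_bot : refuted Bot.
Proof.
  intros x _; exists w0; split; [exact w0_admissible|].
  apply stone_least; intros; apply hbot_le.
Qed.

Lemma refuted_top : refuted Top.
Proof. intros x hx; exfalso; exact (hx I). Qed.

Lemma witnessed_and a b : negative a = true -> negative b = true -> S_valued a -> S_valued b ->
  witnessed a -> witnessed b -> witnessed (And a b).
Proof.
  intros hna hnb hSa hSb ha hb x [hxa hxb].
  destruct (witnessed_below_neg a x hna hSa ha hxa) as [w1 [hw1 k1]].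
  destruct (witnessed_below_neg b x hnb hSb hb hxb) as [w2 [hw2 k2]].
  assert (hw := admissible_vmeet w1 w2 hw1 hw2).
  exists (vmeet w1 w2); split; [exact hw|].
  apply (stone_meet _ _ x (hSa _ hw) (hSb _ hw)); split.
  - exact (k1 _ hw (vmeet_vlel w1 w2)).
  - exact (k2 _ hw (vmeet_vler w1 w2)).
Qed.

Lemma witnessed_or a b : S_valued a -> S_valued b -> S_valued (Or a b) ->
  witnessed a -> witnessed b -> witnessed (Or a b).
Proof.
  intros hSa hSb hSab ha hb x hx.
  destruct hx as [hx|hx]; [destruct (ha x hx) as [w [hw k]]|destruct (hb x hx) as [w [hw k]]];
    exists w; split; auto; apply (stone_join _ _ x (hSa w hw) (hSb w hw) (hSab w hw)); auto.
Qed.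

Lemma witnessed_bot : witnessed Bot.
Proof. intros x []. Qed.

Lemma witnessed_top : S_valued Top -> witnessed Top.
Proof.
  intros hS x _; exists w0; split; [exact w0_admissible|].
  destruct (stone_nonempty x) as [a ha]; apply (stone_up a); [exact ha|apply hS, w0_admissible|apply hle_top].
Qed.

Definition instances (f : fm) : H -> Prop :=
  fun c => S c /\ exists w, admissible w /\ le (evalH H w f) c.

Definition instances_below (f : fm) : H -> Prop :=
  fun c => S c /\ exists w, admissible w /\ le c (evalH H w f).

Lemma instances_filter f : positive f = true -> S_valued f -> is_filter H S (instances f).
Proof.
  intros hp hS; split; [|split; [|split]].
  - intros c [hc _]; exact hc.
  - exists (evalH H w0 f); split; [apply hS, w0_admissible|exists w0; split; [exact w0_admissible|apply hle_refl]].
  - intros c d [_ [w [hw l]]] hd hcd; split; [exact hd|exists w; split; [exact hw|exact (hle_trans _ _ _ _ l hcd)]].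
  - intros c d [hc [w1 [hw1 l1]]] [hd [w2 [hw2 l2]]]; split; [apply subreduct_meet; auto|].
    exists (vmeet w1 w2); split; [apply admissible_vmeet; auto|].
    apply hle_meet.
    + exact (hle_trans _ _ _ _ (evalH_vle_pos f _ _ hp (vmeet_vlel w1 w2)) l1).
    + exact (hle_trans _ _ _ _ (evalH_vle_pos f _ _ hp (vmeet_vler w1 w2)) l2).
Qed.

Lemma instances_self f w : S_valued f -> admissible w -> instances f (evalH H w f).
Proof. intros hS hw; split; [apply hS, hw|exists w; split; [exact hw|apply hle_refl]]. Qed.

Lemma instances_below_self f w : S_valued f -> admissible w -> instances_below f (evalH H w f).
Proof. intros hS hw; split; [apply hS, hw|exists w; split; [exact hw|apply hle_refl]]. Qed.

(* Either some [h] in [x] already satisfies [h /\ a(w) <= b(w)], or the filter generated by [x] and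
   the instances of [a] avoids every element below an instance of [b] and extends to a point
   above [x] in [a] but not in [b]. *)
Lemma witnessed_imp a b : positive a = true -> negative b = true ->
  S_valued a -> S_valued b -> S_valued (Imp a b) -> refuted a -> witnessed b -> witnessed (Imp a b).
Proof.
  intros hpa hnb hSa hSb hSab ha hb x hx.
  pose (K := filter_join H S (proj1_sig x) (instances a)).
  assert (hK : is_filter H S K)
    by (apply filter_join_filter; [exact subreduct_meet|apply point_filter|apply instances_filter; auto]).
  destruct (classic (exists c, K c /\ instances_below b c))
    as [[c [[_ [h [g [hh [[_ [w1 [hw1 l1]]] l]]]]] [_ [w2 [hw2 l2]]]]]|hno].
  - assert (hw := admissible_vmeet w1 w2 hw1 hw2).
    exists (vmeet w1 w2); split; [exact hw|].
    apply (stone_up h); [exact hh|apply hSab, hw|apply himp_adj].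
    refine (hle_trans _ _ _ _ _ (evalH_vle_neg b _ _ hnb (vmeet_vler w1 w2))).
    refine (hle_trans _ _ _ _ _ (hle_trans _ _ _ _ l l2)).
    apply hmeet_mono; [apply hle_refl|].
    exact (hle_trans _ _ _ _ (evalH_vle_pos a _ _ hpa (vmeet_vlel w1 w2)) l1).
  - destruct (mi_extend H S K (instances_below b) hK) as [G [hG [hKG hGD]]].
    + intros d hd hKd; apply hno; exists d; split; assumption.
    + exists (evalH H w0 b); apply instances_below_self; [exact hSb|exact w0_admissible].
    + intros d [hd _]; exact hd.
    + intros d1 d2 [_ [w1 [hw1 l1]]] [_ [w2 [hw2 l2]]].
      exists (evalH H (vmeet w1 w2) b); split; [apply instances_below_self, admissible_vmeet; auto|].
      split.
      * exact (hle_trans _ _ _ _ l1 (evalH_vle_neg b _ _ hnb (vmeet_vlel w1 w2))).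
      * exact (hle_trans _ _ _ _ l2 (evalH_vle_neg b _ _ hnb (vmeet_vler w1 w2))).
    + exfalso; apply hx; exists (point G hG); split; [|split].
      * intros c hc; apply hKG, filter_join_l; auto using point_filter, instances_filter.
      * apply NNPP; intro hya; destruct (ha _ hya) as [w [hw k]]; apply k, hKG, filter_join_r;
          auto using point_filter, instances_filter, instances_self.
      * intro hyb; destruct (hb _ hyb) as [w [hw k]].
        exact (hGD _ (instances_below_self b w hSb hw) k).
Qed.

Lemma refuted_not a : refuted (Imp a Bot) -> refuted (Not a).
Proof.
  intros h x hx; destruct (h x hx) as [w [hw k]]; exists w; split; [exact hw|].
  rewrite evalH_Not; exact k.
Qed.

Lemma witnessed_not a : witnessed (Imp a Bot) -> witnessed (Not a).
Proof.
  intros h x hx; destruct (h x hx) as [w [hw k]]; exists w; split; [exact hw|].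
  rewrite evalH_Not; exact k.
Qed.

Lemma S_valued_imp_bot a : S_valued (Not a) -> S_valued (Imp a Bot).
Proof. intros h w hw; rewrite <- evalH_Not; auto. Qed.

Lemma esakia f : in_lang L f = true ->
  (positive f = true -> refuted f) /\ (negative f = true -> witnessed f).
Proof.
  induction f; intro hf; assert (hSf := S_valued_in_lang _ hf); cbn [in_lang positive negative] in *;
    repeat match goal with h : _ && _ = true |- _ => apply andb_prop in h; destruct h end;
    repeat match goal with IH : in_lang L ?g = true -> _, h : in_lang L ?g = true |- _ =>
      specialize (IH h); pose proof (S_valued_in_lang g h) end;
    split; intro hp; try discriminate;
    repeat match goal with h : _ && _ = true |- _ => apply andb_prop in h; destruct h end;
    repeat match goal with IH : _ /\ _ |- _ => destruct IH end.
  - apply refuted_var.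
  - apply refuted_and; auto.
  - apply witnessed_and; auto.
  - apply refuted_or; auto.
  - apply witnessed_or; auto.
  - apply refuted_imp; auto.
  - apply witnessed_imp; auto.
  - assert (hSbot : S_valued Bot) by (intros w _; apply subreduct_bot_of_neg; assumption).
    apply refuted_not, refuted_imp; auto using refuted_bot.
  - assert (hSbot : S_valued Bot) by (intros w _; apply subreduct_bot_of_neg; assumption).
    apply witnessed_not, witnessed_imp; auto using witnessed_bot, S_valued_imp_bot.
  - apply refuted_bot.
  - apply witnessed_bot.
  - apply refuted_top.
  - apply witnessed_top; exact hSf.
Qed.

Lemma ante_witnessed_below a : sahl_ante a -> in_lang L a = true ->
  forall y, evalUp X closed_val a y -> witnessed_below a y.
Proof.
  intros ha; induction ha as [n|f hneg| | |a b ha IHa hb IHb|a b ha IHa hb IHb];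
    intros hl y hy; assert (hS := S_valued_in_lang _ hl).
  - exists w0; split; [exact w0_admissible|intros w' hw' _; apply hy, hw'].
  - exact (witnessed_below_neg f y hneg hS (proj2 (esakia f hl) hneg) hy).
  - destruct hy.
  - exact (witnessed_below_neg Top y eq_refl hS (witnessed_top hS) hy).
  - apply andb_prop in hl as [[_ hla]%andb_prop hlb]; destruct hy as [hya hyb].
    destruct (IHa hla y hya) as [w1 [hw1 k1]], (IHb hlb y hyb) as [w2 [hw2 k2]].
    exists (vmeet w1 w2); split; [apply admissible_vmeet; auto|intros w' hw' hle].
    apply (stone_meet _ _ y (S_valued_in_lang a hla w' hw') (S_valued_in_lang b hlb w' hw')); split.
    + exact (k1 w' hw' (vle_trans _ _ _ hle (vmeet_vlel w1 w2))).
    + exact (k2 w' hw' (vle_trans _ _ _ hle (vmeet_vler w1 w2))).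
  - apply andb_prop in hl as [[_ hla]%andb_prop hlb].
    destruct hy as [hy|hy]; [destruct (IHa hla y hy) as [w [hw k]]|destruct (IHb hlb y hy) as [w [hw k]]];
      exists w; split; auto; intros w' hw' hle;
      apply (stone_join _ _ y (S_valued_in_lang a hla w' hw') (S_valued_in_lang b hlb w' hw') (hS w' hw'));
      auto.
Qed.

Lemma impl_refuted_below f x : sahl_impl f -> in_lang L f = true ->
  ~ evalUp X closed_val f x -> refuted_below f x.
Proof.
  intros [hp|[[a [-> ha]]|[a [b [-> [ha hpb]]]]]] hl hx.
  - exact (refuted_below_pos f x hp (S_valued_in_lang f hl) (proj1 (esakia f hl) hp) hx).
  - apply andb_prop in hl as [hN hla].
    assert (hSbot : S_valued Bot) by (intros w _; apply subreduct_bot_of_neg; exact hN).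
    destruct (refuted_below_imp a Bot x (S_valued_in_lang a hla) hSbot eq_refl
                (ante_witnessed_below a ha hla) refuted_bot hx) as [w [hw k]].
    exists w; split; [exact hw|intros w' hw' hle; rewrite evalH_Not; exact (k w' hw' hle)].
  - apply andb_prop in hl as [[_ hla]%andb_prop hlb].
    exact (refuted_below_imp a b x (S_valued_in_lang a hla) (S_valued_in_lang b hlb) hpb
             (ante_witnessed_below a ha hla) (proj1 (esakia b hlb) hpb) hx).
Qed.

Lemma body_refuted_below f x : sahl_body f -> in_lang L f = true ->
  ~ evalUp X closed_val f x -> refuted_below f x.
Proof.
  intros hf; induction hf as [f hf|a b ha IHa hb IHb|a b ha IHa hb IHb]; intros hl hx.
  - exact (impl_refuted_below f x hf hl hx).
  - apply andb_prop in hl as [[_ hla]%andb_prop hlb]; apply not_and_or in hx.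
    destruct hx as [hx|hx]; [destruct (IHa hla hx) as [w [hw k]]|destruct (IHb hlb hx) as [w [hw k]]];
      exists w; split; auto; intros w' hw' hle hx'; apply (k w' hw' hle);
      apply (stone_meet _ _ x (S_valued_in_lang a hla w' hw') (S_valued_in_lang b hlb w' hw')) in hx';
      apply hx'.
  - assert (hS := S_valued_in_lang _ hl).
    apply andb_prop in hl as [[_ hla]%andb_prop hlb]; apply not_or_and in hx; destruct hx as [hxa hxb].
    destruct (IHa hla hxa) as [w1 [hw1 k1]], (IHb hlb hxb) as [w2 [hw2 k2]].
    exists (vmeet w1 w2); split; [apply admissible_vmeet; auto|intros w' hw' hle hx'].
    apply (stone_join _ _ x (S_valued_in_lang a hla w' hw') (S_valued_in_lang b hlb w' hw') (hS w' hw'))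
      in hx'.
    destruct hx' as [hx'|hx'].
    + exact (k1 w' hw' (vle_trans _ _ _ hle (vmeet_vlel w1 w2)) hx').
    + exact (k2 w' hw' (vle_trans _ _ _ hle (vmeet_vler w1 w2)) hx').
Qed.

Lemma refuted_below_all phis x : (forall f, In f phis -> refuted_below f x) ->
  exists w, admissible w /\ forall f, In f phis -> ~ stone (evalH H w f) x.
Proof.
  intro h; cut (exists w, admissible w /\ forall w', admissible w' -> vle w' w ->
                  forall f, In f phis -> ~ stone (evalH H w' f) x).
  { intros [w [hw k]]; exists w; split; [exact hw|exact (k w hw (vle_refl w))]. }
  induction phis as [|f phis IH].
  - exists w0; split; [exact w0_admissible|intros _ _ _ _ []].
  - destruct IH as [w1 [hw1 k1]]; [intros g hg; apply h; right; exact hg|].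
    destruct (h f (or_introl eq_refl)) as [w2 [hw2 k2]].
    exists (vmeet w1 w2); split; [apply admissible_vmeet; auto|].
    intros w' hw' hle g [<-|hg].
    + exact (k2 w' hw' (vle_trans _ _ _ hle (vmeet_vler w1 w2))).
    + exact (k1 w' hw' (vle_trans _ _ _ hle (vmeet_vlel w1 w2)) g hg).
Qed.

End Esakia.

(** * Finite approximation of Sahlqvist refutations *)

Section FiniteApproximation.
Variable v : nat -> X -> Prop.
Hypothesis v_upset : forall n, is_upset X (v n).
Variable x0 : X.

Definition fin_val (Ls : list X) (p : nat) (x : X) : Prop :=
  exists G, In G Ls /\ v p G /\ ple X G x.

Definition above_x0 (Ls : list X) : Prop := forall G, In G Ls -> ple X x0 G.

Lemma fin_val_sub Ls p x : fin_val Ls p x -> v p x.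
Proof. intros [G [_ [hG hGx]]]; exact (v_upset p G x hGx hG). Qed.

Lemma fin_val_upset Ls p : is_upset X (fin_val Ls p).
Proof. intros x y hxy [G [h1 [h2 h3]]]; exists G; split; [|split; [|exact (ple_trans X _ _ _ h3 hxy)]]; assumption. Qed.

Lemma ante_fin_val a Ls G : sahl_ante a -> In G Ls -> evalUp X v a G -> evalUp X (fin_val Ls) a G.
Proof.
  intros ha hG; induction ha as [n|f hneg| | |a b ha IHa hb IHb|a b ha IHa hb IHb]; intro h.
  - exists G; split; [exact hG|split; [exact h|apply ple_refl]].
  - exact (proj2 (evalUp_mono X _ _ (fin_val_sub Ls) f) hneg G h).
  - destruct h.
  - exact I.
  - destruct h as [h1 h2]; split; [apply IHa, h1|apply IHb, h2].
  - destruct h as [h|h]; [left; apply IHa, h|right; apply IHb, h].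
Qed.

Lemma impl_fin_refuted f : sahl_impl f -> ~ evalUp X v f x0 ->
  exists Ls0, above_x0 Ls0 /\ forall Ls, incl Ls0 Ls -> ~ evalUp X (fin_val Ls) f x0.
Proof.
  intros [hp|[[a [-> ha]]|[a [b [-> [ha hb]]]]]] hx.
  - exists []; split; [intros G []|intros Ls _ h; apply hx].
    exact (proj1 (evalUp_mono X _ _ (fin_val_sub Ls) f) hp x0 h).
  - apply NNPP in hx; destruct hx as [y [hxy [hy _]]].
    exists [y]; split; [intros G [<-|[]]; exact hxy|].
    intros Ls hincl h; apply h; exists y; split; [exact hxy|split; [|tauto]].
    apply ante_fin_val; [exact ha|apply hincl; left; reflexivity|exact hy].
  - apply NNPP in hx; destruct hx as [y [hxy [hy hny]]].
    exists [y]; split; [intros G [<-|[]]; exact hxy|].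
    intros Ls hincl h; apply h; exists y; split; [exact hxy|split].
    + apply ante_fin_val; [exact ha|apply hincl; left; reflexivity|exact hy].
    + intro hb'; exact (hny (proj1 (evalUp_mono X _ _ (fin_val_sub Ls) b) hb y hb')).
Qed.

Lemma body_fin_refuted f : sahl_body f -> ~ evalUp X v f x0 ->
  exists Ls0, above_x0 Ls0 /\ forall Ls, incl Ls0 Ls -> ~ evalUp X (fin_val Ls) f x0.
Proof.
  intros hf; induction hf as [f hf|a b ha IHa hb IHb|a b ha IHa hb IHb]; intro hx.
  - exact (impl_fin_refuted f hf hx).
  - apply not_and_or in hx; destruct hx as [hx|hx];
      [destruct (IHa hx) as [Ls0 [h1 h2]]|destruct (IHb hx) as [Ls0 [h1 h2]]];
      exists Ls0; split; auto; intros Ls hi [k1 k2]; [exact (h2 Ls hi k1)|exact (h2 Ls hi k2)].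
  - apply not_or_and in hx; destruct hx as [hxa hxb].
    destruct (IHa hxa) as [Ls1 [h1 h2]], (IHb hxb) as [Ls2 [g1 g2]].
    exists (Ls1 ++ Ls2); split; [intros G hG; apply in_app_or in hG as [hG|hG]; auto|].
    intros Ls hi [k|k]; [apply (h2 Ls)|apply (g2 Ls)]; auto;
      intros G hG; apply hi, in_or_app; auto.
Qed.

Lemma all_fin_refuted phis : (forall f, In f phis -> sahl_body f /\ ~ evalUp X v f x0) ->
  exists Ls, above_x0 Ls /\ forall f, In f phis -> ~ evalUp X (fin_val Ls) f x0.
Proof.
  intro h; cut (exists Ls0, above_x0 Ls0 /\
                  forall Ls, incl Ls0 Ls -> forall f, In f phis -> ~ evalUp X (fin_val Ls) f x0).
  { intros [Ls0 [h1 h2]]; exists Ls0; split; [exact h1|apply h2, incl_refl]. }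
  induction phis as [|f phis IH].
  - exists []; split; [intros G []|intros Ls _ f []].
  - destruct IH as [Ls1 [h1 h2]]; [intros g hg; apply h; right; exact hg|].
    destruct (h f (or_introl eq_refl)) as [hb hn].
    destruct (body_fin_refuted f hb hn) as [Ls2 [g1 g2]].
    exists (Ls1 ++ Ls2); split; [intros G hG; apply in_app_or in hG as [hG|hG]; auto|].
    intros Ls hi g [<-|hg]; [apply g2|apply h2; [|exact hg]];
      intros G hG; apply hi, in_or_app; auto.
Qed.

Section ClosedValuation.
Variable Ls : list X.
Hypothesis Ls_above : above_x0 Ls.

Definition fin_filter (p : nat) : H -> Prop :=
  fun a => S a /\ forall G, In G Ls -> v p G -> stone a G.

Notation cval := (closed_val fin_filter).

Lemma fin_filter_filter p : is_filter H S (fin_filter p).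
Proof.
  split; [|split; [|split]].
  - intros a [ha _]; exact ha.
  - destruct (stone_nonempty x0) as [a ha]; exists a; split; [exact (stone_sub a x0 ha)|].
    intros G hG _; exact (Ls_above G hG a ha).
  - intros a b [_ h] hb hab; split; [exact hb|intros G hG hvG; exact (stone_up a b G (h G hG hvG) hb hab)].
  - intros a b [ha h1] [hb h2]; split; [apply subreduct_meet; auto|].
    intros G hG hvG; apply stone_meet; auto.
Qed.

Lemma fin_filter_x0 p a : stone a x0 -> fin_filter p a.
Proof. intro ha; split; [exact (stone_sub a x0 ha)|intros G hG _; exact (Ls_above G hG a ha)]. Qed.

Lemma fin_val_closed p x : fin_val Ls p x -> cval p x.
Proof. intros [G [hG [hvG hGx]]] a [_ h]; apply hGx, h; assumption. Qed.

(* When [S] minus [x] is directed in this sense, the elements [c_G] in [G] but not in [x], one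
   for each [G] of [Ls] in [v p], have a common bound lying in [fin_filter p] but not in [x]. *)
Definition outside_directed (x : X) : Prop := forall u c, S u -> S c -> ~ stone u x -> ~ stone c x ->
  exists d, S d /\ ~ stone d x /\ forall G, In G Ls -> stone u G \/ stone c G -> stone d G.

Lemma closed_fin_val p x : outside_directed x -> cval p x -> fin_val Ls p x.
Proof.
  intros hdir hx; apply NNPP; intro hn.
  cut (forall Ls', incl Ls' Ls -> exists u, S u /\ ~ stone u x /\
         forall G, In G Ls' -> v p G -> stone u G).
  { intro k; destruct (k Ls (incl_refl Ls)) as [u [hu [nu k']]]; exact (nu (hx u (conj hu k'))). }
  induction Ls' as [|G Ls' IH]; intro hincl.
  - destruct (proj2_sig x) as [_ [[u [hu nu]] _]]; exists u; split; [exact hu|split; [exact nu|intros G []]].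
  - destruct IH as [u [hu [nu k]]]; [intros G' hG'; apply hincl; right; exact hG'|].
    destruct (classic (v p G)) as [hvG|hvG].
    + assert (hc : exists c, stone c G /\ ~ stone c x).
      { apply NNPP; intro hno; apply hn; exists G; split; [apply hincl; left; reflexivity|split; [exact hvG|]].
        intros c hc; apply NNPP; intro nc; apply hno; exists c; split; assumption. }
      destruct hc as [c [hc nc]].
      destruct (hdir u c hu (stone_sub c G hc) nu nc) as [d [hd [nd kd]]].
      exists d; split; [exact hd|split; [exact nd|]].
      intros G' [<-|hG'] hvG'; apply kd; [apply hincl; left; reflexivity|right; exact hc|
                                           apply hincl; right; exact hG'|left; apply k; assumption].
    + exists u; split; [exact hu|split; [exact nu|]].
      intros G' [<-|hG'] hvG'; [contradiction|apply k; assumption].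
Qed.

Lemma outside_directed_x0 : outside_directed x0.
Proof.
  intros u c hu hc nu nc.
  destruct (mi_outside_bound2 H S subreduct_meet _ u c (proj2_sig x0) hu hc nu nc)
    as [f [z [hf [hz [nz [lu lc]]]]]].
  exists z; split; [exact hz|split; [exact nz|]].
  intros G hG hucG; apply (Ls_above G hG) in hf; destruct hucG as [huG|hcG].
  - apply (stone_up (mt u f)); [apply stone_meet; auto; exact (stone_sub f G hf)|exact hz|exact lu].
  - apply (stone_up (mt c f)); [apply stone_meet; auto; exact (stone_sub f G hf)|exact hz|exact lc].
Qed.

Lemma outside_directed_imp x : L cImp = true -> outside_directed x.
Proof.
  intros hI u c hu hc nu nc.
  destruct (mi_outside_bound2 H S subreduct_meet _ u c (proj2_sig x) hu hc nu nc)
    as [f [z [hf [hz [nz [lu lc]]]]]].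
  assert (hfz : S (im f z)) by (apply subreduct_imp; [exact hI|exact (stone_sub f x hf)|exact hz]).
  exists (im f z); split; [exact hfz|split].
  - intro h; apply nz, (stone_up (mt f (im f z))); [apply stone_meet; auto; exact (stone_sub f x hf)|exact hz|apply himp_mp].
  - intros G _ [huG|hcG]; [apply (stone_up u)|apply (stone_up c)]; auto; apply himp_adj; assumption.
Qed.

Lemma outside_directed_join x : L cOr = true -> outside_directed x.
Proof.
  intros hO u c hu hc nu nc.
  assert (huc : S (jn u c)) by (apply subreduct_join; assumption).
  exists (jn u c); split; [exact huc|split].
  - intro h; apply (stone_join u c x hu hc huc) in h; tauto.
  - intros G _ [huG|hcG]; apply stone_join; auto.
Qed.

(* A point [y] above [x] in [cval p] meets no [G] of [Ls] and [v p] above a common point, so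
   each such [G] contains the pseudocomplement of some element of [y]; their meet [h] then has
   [~ h] in [fin_filter p], hence in [y]. *)
Lemma up_neg_fin_val_closed p x : L cNot = true -> up_neg X (fin_val Ls p) x -> up_neg X (cval p) x.
Proof.
  intros hN; rewrite !up_negE; intros hn [y [hxy hy]].
  assert (hSbot := subreduct_bot_of_neg hN).
  cut (forall Ls', incl Ls' Ls -> exists h, stone h y /\ forall G, In G Ls' -> v p G -> stone (hneg H h) G).
  { intro k; destruct (k Ls (incl_refl Ls)) as [h [hh k']].
    assert (hSh := stone_sub h y hh); assert (hSnh := subreduct_neg h hN hSh).
    apply (stone_least (mt h (hneg H h)) y); [intros s _; exact (hle_trans _ _ _ _ (hmeet_neg _ h) (hbot_le _ s))|].
    apply (stone_meet _ _ y hSh hSnh); split; [exact hh|exact (hy _ (conj hSnh k'))]. }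
  induction Ls' as [|G Ls' IH]; intro hincl.
  - destruct (stone_nonempty y) as [h hh]; exists h; split; [exact hh|intros G []].
  - destruct IH as [h1 [hh1 k1]]; [intros G' hG'; apply hincl; right; exact hG'|].
    assert (hS1 := stone_sub h1 y hh1).
    destruct (classic (v p G)) as [hvG|hvG].
    + assert (hsep : exists h g, stone h y /\ stone g G /\ le (mt h g) (hbot H)).
      { apply NNPP; intro hno.
        assert (hK := filter_join_filter H S subreduct_meet _ _ (point_filter y) (point_filter G)).
        destruct (mi_extend_avoid H S _ (hbot H) hK hSbot) as [G' [hG' [hKG' nG']]].
        - intros [_ [h [g [hh [hg l]]]]]; apply hno; exists h, g; auto.
        - apply hn; exists (point G' hG'); split.
          + intros a ha; apply hKG', filter_join_l; auto using point_filter.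
          + exists G; split; [apply hincl; left; reflexivity|split; [exact hvG|]].
            intros a ha; apply hKG', filter_join_r; auto using point_filter. }
      destruct hsep as [h [g [hh [hg l]]]].
      assert (hSh := stone_sub h y hh).
      exists (mt h1 h); split; [apply stone_meet; auto|].
      assert (hSn : S (hneg H (mt h1 h))) by (apply subreduct_neg, subreduct_meet; auto).
      intros G' [<-|hG'] hvG'.
      * apply (stone_up g); [exact hg|exact hSn|rewrite hnegE; apply himp_adj].
        refine (hle_trans _ _ _ _ _ l); rewrite hmeetC; apply hmeet_mono; [apply hle_meetr|apply hle_refl].
      * apply (stone_up (hneg H h1)); [apply k1; assumption|exact hSn|apply hneg_mono, hle_meetl].
    + exists h1; split; [exact hh1|intros G' [<-|hG'] hvG'; [contradiction|apply k1; assumption]].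
Qed.

Lemma transfer_meet_neg f : in_lang meet_neg_lang f = true -> in_lang L f = true ->
  (forall y, evalUp X (fin_val Ls) f y -> evalUp X cval f y) /\
  (evalUp X cval f x0 -> evalUp X (fin_val Ls) f x0).
Proof.
  induction f; cbn [in_lang meet_neg_lang]; intros hf hl; try discriminate.
  - split; [intro y; apply fin_val_closed|apply closed_fin_val, outside_directed_x0].
  - apply andb_prop in hf as [[_ hf1]%andb_prop hf2]; apply andb_prop in hl as [[_ hl1]%andb_prop hl2].
    destruct (IHf1 hf1 hl1) as [h1 k1], (IHf2 hf2 hl2) as [h2 k2].
    split; [intros y [a b]; split; [apply h1, a|apply h2, b]|intros [a b]; split; [apply k1, a|apply k2, b]].
  - apply andb_prop in hf as [_ hf]; apply andb_prop in hl as [hN _].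
    assert (E := up_neg_evalUp_ext X _ _ (fin_val_upset Ls) (closed_val_upset fin_filter)).
    assert (E' : forall y, up_neg X (evalUp X (fin_val Ls) f) y <-> up_neg X (evalUp X cval f) y).
    { apply E; [|exact hf]; intros p y; split; [apply up_neg_fin_val_closed, hN|].
      rewrite !up_negE; intros h [u [hyu hu]]; apply h; exists u; split; [exact hyu|apply fin_val_closed, hu]. }
    split; [intro y; apply E'|apply E'].
  - split; [intros y []|intros []].
  - split; intros; exact I.
Qed.

Lemma transfer_x0 f : in_lang L f = true -> evalUp X cval f x0 -> evalUp X (fin_val Ls) f x0.
Proof.
  intros hf h; destruct (L cImp) eqn:hI; [|destruct (L cOr) eqn:hO].
  - refine (proj1 (evalUp_ext X _ _ _ f x0) h); intros p y.
    split; [apply closed_fin_val, outside_directed_imp, hI|apply fin_val_closed].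
  - refine (proj1 (evalUp_ext X _ _ _ f x0) h); intros p y.
    split; [apply closed_fin_val, outside_directed_join, hO|apply fin_val_closed].
  - apply transfer_meet_neg; [|exact hf|exact h].
    apply (in_lang_sub L); [intros [] hc; cbn; congruence|exact hf].
Qed.

End ClosedValuation.
End FiniteApproximation.

Lemma alg_sat_instance_in_point phis y z w x : y <> z ->
  (forall f, In f phis -> occurs y f = false /\ occurs z f = false) -> qe_in_lang L phis ->
  alg_sat H S phis y z -> (forall n, S (w n)) -> exists f, In f phis /\ stone (evalH H w f) x.
Proof.
  intros hyz hocc hphis hA hw; apply NNPP; intro hno.
  destruct (mi_outside_bound H S subreduct_meet _ (map (evalH H w) phis) (proj2_sig x))
    as [f0 [z0 [hf0 [hz0 [nz0 hle]]]]].
  { intros c hc; apply in_map_iff in hc as [f [<- hf]].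
    split; [apply subreduct_eval; [exact (hphis f hf)|exact hw]|intro h; apply hno; exists f; auto]. }
  apply nz0, (stone_up f0 z0 x hf0 hz0).
  pose (w' := upd (upd w y f0) z z0).
  assert (hw'y : w' y = f0)
    by (unfold w', upd; rewrite (proj2 (Nat.eqb_neq y z) hyz), Nat.eqb_refl; reflexivity).
  assert (hw'z : w' z = z0) by (unfold w', upd; rewrite Nat.eqb_refl; reflexivity).
  rewrite <- hw'y, <- hw'z; apply hA.
  - intro n; unfold w', upd; destruct (n =? z); [exact hz0|].
    destruct (n =? y); [exact (stone_sub f0 x hf0)|apply hw].
  - intros f hf; destruct (hocc f hf) as [oy oz]; rewrite hw'y, hw'z.
    unfold w'; rewrite !evalH_upd_fresh by assumption; apply hle, in_map, hf.
Qed.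

Lemma up_sat_of_alg_sat phis y z : sahlqvist_qe phis y z -> qe_in_lang L phis ->
  alg_sat H S phis y z -> up_sat X phis y z.
Proof.
  intros [_ [hyz [hocc hbody]]] hphis hA v hv hprem x0 hy; apply NNPP; intro hz.
  assert (hout : forall f, In f phis -> sahl_body f /\ ~ evalUp X v f x0)
    by (intros f hf; split; [exact (hbody f hf)|intro h; exact (hz (hprem f hf x0 (conj h hy)))]).
  destruct (all_fin_refuted v hv x0 phis hout) as [Ls [hLs hfin]].
  destruct (stone_nonempty x0) as [c0 hc0].
  pose (F := fin_filter v Ls).
  assert (hF : forall p, is_filter H S (F p)) by exact (fin_filter_filter v x0 Ls hLs).
  assert (hc0F : admissible F (fun _ => c0)) by exact (fun p => fin_filter_x0 v x0 Ls hLs p c0 hc0).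
  destruct (refuted_below_all F hF (fun _ => c0) hc0F phis x0) as [w [hw hnw]].
  { intros f hf; apply (body_refuted_below F hF (fun _ => c0) hc0F f x0 (hbody f hf) (hphis f hf)).
    intro h; exact (hfin f hf (transfer_x0 v x0 Ls hLs f (hphis f hf) h)). }
  assert (hwS : forall n, S (w n)) by (intro n; exact (filter_sub H S _ _ (hF n) (hw n))).
  destruct (alg_sat_instance_in_point phis y z w x0 hyz hocc hphis hA hwS) as [f [hf hfx]].
  exact (hnw f hf hfx).
Qed.

End DualSpace.

Theorem corollary5p12
  (* tr : the Sahlqvist correspondent, a first-order sentence in the language
     of posets, characterized by  Up(X) |= Phi  iff  X |= tr(Phi)  *)
  (tr : list fm -> nat -> nat -> fo)
  (Htr : forall phis y z, sahlqvist_qe phis y z ->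
     fo_sentence (tr phis y z) /\
     forall X : Poset, up_sat X phis y z <-> fo_sat X (tr phis y z))
  (L : conn -> bool) (HL : L cAnd = true)
  (phis : list fm) (y z : nat)
  (HPhi : sahlqvist_qe phis y z) (HPhiL : qe_in_lang L phis)
  (H : HA) (S : H -> Prop) (HS : subreduct L H S) :
  alg_sat H S phis y z <-> fo_sat (dual_poset H S) (tr phis y z).
Proof.
  rewrite <- (proj2 (Htr phis y z HPhi) (dual_poset H S)); split.
  - exact (up_sat_of_alg_sat L H S HS HL phis y z HPhi HPhiL).
  - exact (alg_sat_of_up_sat L H S HS HL phis y z HPhiL).
Qed.
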